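(* For every point of $\mathcal H$ and all $j,k\ge0$, the vector field $X_k$ of the central system satisfies $$\frac{\partial H^{(j)}}{\partial t_k}=-\pi_-\big(H^{(j)}H^{(k)}\big),$$ where $\pi_-$ is the projection onto $\mathcal H_-$ along $\mathcal H_+$ defined at that point.
   Context: Let $z$ be a formal variable and $\mathcal L$ the space of formal Laurent series $\sum_{j\le N} l_j z^j$ (finitely many positive powers of $z$). Let $\mathcal H$ be the set of sequences $H=(H^{(k)})_{k\ge0}$ of elements of $\mathcal L$ with $H^{(0)}=1$ and, for $k\ge1$, $H^{(k)}=z^k+\sum_{l\ge1}H^k_l z^{-l}$; the coefficients $H^k_l$ are coordinates on $\mathcal H$, and we set $H^0_l=0$. The central system (CS) is the family of vector fields $X_j$, $j\ge1$, on $\mathcal H$, with associated times $t_j$, defined by $$\frac{\partial H^{(k)}}{\partial t_j}=H^{(j+k)}-H^{(j)}H^{(k)}+\sum_{l=1}^{k}H^j_lH^{(k-l)}+\sum_{l=1}^{j}H^k_lH^{(j-l)},\qquad k\ge0;$$ the right-hand side contains only negative powers of $z$, so this determines the components $X_j(H^k_l)$. For $H\in\mathcal H$ let $\mathcal H_+=\mathrm{span}\{H^{(k)}:k\ge0\}$ (finite linear combinations) and $\mathcal H_-=\{\sum_{l\ge1}c_lz^{-l}\}$, so that $\mathcal L=\mathcal H_+\oplus\mathcal H_-$; let $\pi_\pm$ be the corresponding projections. *)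

From HB Require Import structures.
From mathcomp Require Import all_boot all_order all_algebra.
From mathcomp Require Import boolp classical_sets fsbigop.
From Stdlib Require Import ClassicalEpsilon.
Set Implicit Arguments. Unset Strict Implicit. Unset Printing Implicit Defensive.
Import Order.TTheory GRing.Theory Num.Theory.
Local Open Scope ring_scope.

(* A formal Laurent series  sum_n l_n z^n  over the field R is represented by
   its coefficient function  int -> R  (coefficient of z^n). *)
Definition laurent (R : fieldType) := int -> R.

Definition is_laurent (R : fieldType) (f : laurent R) : Prop :=
  exists N : int, forall n : int, N < n -> f n = 0.

(* Product of Laurent series: (f g)_n = sum_{a} f_a g_{n-a}; for elements of L
   this sum has finite support; \sum_(a \in setT) is the finitely supported sum. *)
Definition lmul (R : fieldType) (f g : laurent R) : laurent R :=
  fun n => \sum_(a \in [set: int]) f a * g (n - a).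

(* A point of calH is given by its coordinates H k l = H^k_l (k >= 1, l >= 1);
   entries with k = 0 or l = 0 are irrelevant.  Convention H^0_l = 0: *)
Definition Hc (R : fieldType) (H : nat -> nat -> R) (k l : nat) : R :=
  if k == 0%N then 0 else H k l.

(* The series H^(k): H^(0) = 1, H^(k) = z^k + sum_{l>=1} H^k_l z^{-l}. *)
Definition Hser (R : fieldType) (H : nat -> nat -> R) (k : nat) : laurent R :=
  fun n => if k == 0%N then (n == 0)%:R
           else if n == k%:Z then 1
           else if n < 0 then H k `|n|%N else 0.

(* Right-hand side of the central system for d H^(k) / d t_j. *)
Definition CS_rhs (R : fieldType) (H : nat -> nat -> R) (j k : nat) : laurent R :=
  fun n => Hser H (j + k) n - lmul (Hser H j) (Hser H k) n
           + \sum_(1 <= l < k.+1) Hc H j l * Hser H (k - l) n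
           + \sum_(1 <= l < j.+1) Hc H k l * Hser H (j - l) n.

(* Components of the vector field X_j: X_j(H^k_l) = coefficient of z^{-l}
   in the right-hand side. *)
Definition X (R : fieldType) (H : nat -> nat -> R) (j k l : nat) : R :=
  CS_rhs H j k (- (l%:Z)).

(* dH^(k)/dt_j := sum_{l>=1} X_j(H^k_l) z^{-l}  (the z^k term is constant). *)
Definition dHdt (R : fieldType) (H : nat -> nat -> R) (j k : nat) : laurent R :=
  fun n => if n < 0 then X H j k `|n|%N else 0.

Definition in_Hplus (R : fieldType) (H : nat -> nat -> R) (f : laurent R) : Prop :=
  exists (N : nat) (c : nat -> R),
    forall n : int, f n = \sum_(k < N) c k * Hser H k n.

Definition in_Hminus (R : fieldType) (f : laurent R) : Prop :=
  forall n : int, 0 <= n -> f n = 0.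

Definition pi_minus (R : fieldType) (H : nat -> nat -> R) (f : laurent R) : laurent R :=
  epsilon (inhabits (fun _ : int => 0 : R))
          (fun g : laurent R => in_Hminus g /\ in_Hplus H (fun n => f n - g n)).

From HB Require Import structures.
From mathcomp Require Import all_boot all_order all_algebra.
From mathcomp Require Import boolp classical_sets fsbigop.
From mathcomp Require Import zify ring.
From Stdlib Require Import ClassicalEpsilon.
Import Order.TTheory GRing.Theory Num.Theory.
Local Open Scope ring_scope.

(* The right-hand side of the central system has no nonnegative powers of z,
   so H^(j) H^(k) = [H^(j+k) + sum_l H^k_l H^(j-l) + sum_l H^j_l H^(k-l)]
   - dH^(j)/dt_k, where the bracket lies in H_+ and dH^(j)/dt_k in H_-.
   The splitting L = H_+ (+) H_- is direct: the coefficient of z^m in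
   sum_i c_i H^(i) is c_m, so an element of H_+ without nonnegative powers is
   zero.  Hence pi_-(H^(j) H^(k)) = - dH^(j)/dt_k. *)

Lemma fsbig_supp2 (T : choiceType) (V : nmodType) (F : T -> V) (x y : T) :
  (forall a, a != x -> a != y -> F a = 0) ->
  \sum_(a \in [set: T]) F a = if x == y then F x else F x + F y.
Proof.
move=> F0.
have sum_seq r : uniq r -> x \in r -> y \in r ->
    \sum_(a \in [set: T]) F a = \sum_(a <- r) F a.
  move=> ur xr yr; rewrite (fsbig_seq _ _ ur) (fsbig_widen [set` r] [set: T] F) //.
  by move=> a [_ /= ar]; apply: F0; apply/eqP => ea; apply: ar; rewrite ea.
have [exy|nxy] := eqVneq x y; first by subst y; rewrite (sum_seq [:: x]) ?inE ?eqxx // big_seq1.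
rewrite (sum_seq [:: x; y]) ?inE ?eqxx ?orbT //=; last by rewrite inE andbT.
by rewrite big_cons big_seq1.
Qed.

Lemma lmulC (R : fieldType) (f g : laurent R) (n : int) : lmul f g n = lmul g f n.
Proof.
rewrite /lmul [RHS](reindex_fsbigT (fun a => n - a)); last first.
  by exists (fun a => n - a) => a; rewrite subKr.
by apply: eq_fsbigr => a _; rewrite subKr mulrC.
Qed.

Section CentralSystem.
Variables (R : fieldType) (H : nat -> nat -> R).

Lemma Hser_nat (q m : nat) : Hser H q m%:Z = (m == q)%:R.
Proof.
rewrite /Hser; have [->|q0] := eqVneq q 0%N; first by [].
rewrite eqz_nat; have [//|mq] := eqVneq m q.
by have -> : (m%:Z < 0) = false by lia.
Qed.

Lemma Hser_neg (q : nat) (n : int) : n < 0 -> Hser H q n = Hc H q `|n|%N.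
Proof.
move=> n0; rewrite /Hser /Hc n0; case: ifP => // _.
  by rewrite (negbTE (ltr0_neq0 n0)).
case: ifP => // /eqP e; move: n0; rewrite e; lia.
Qed.

Lemma Hser_subz (q m p : nat) : Hser H q (m%:Z - p%:Z) =
  if (m < p)%N then Hc H q (p - m) else ((m - p)%N == q)%:R.
Proof.
case: ltnP => mp; first by rewrite Hser_neg; [congr Hc|]; lia.
have -> : m%:Z - p%:Z = (m - p)%N%:Z by lia.
exact: Hser_nat.
Qed.

(* Only a = p and a = m - q contribute, from the leading terms z^p and z^q. *)
Lemma lmul_Hser_nat (p q m : nat) : lmul (Hser H p) (Hser H q) m%:Z =
  if m == (p + q)%N then 1 else Hser H q (m%:Z - p%:Z) + Hser H p (m%:Z - q%:Z).
Proof.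
rewrite /lmul (@fsbig_supp2 _ _ _ p%:Z (m%:Z - q%:Z)); last first.
  move=> a ap aq; case: (ltrP a 0) => a0.
    have -> : m%:Z - a = (`|m%:Z - a|%N)%:Z by lia.
    by rewrite Hser_nat; case: eqP => [e|]; rewrite ?mulr0 //; move/eqP: aq; lia.
  have -> : a = (`|a|%N)%:Z by lia.
  by rewrite Hser_nat; case: eqP => [e|]; rewrite ?mul0r //; move/eqP: ap; lia.
have -> : (p%:Z == m%:Z - q%:Z) = (m == (p + q)%N) by apply/eqP/eqP; lia.
rewrite Hser_nat eqxx mul1r; case: eqP => [e|_].
  have -> : m%:Z - p%:Z = q%:Z by lia.
  by rewrite Hser_nat eqxx.
have -> : m%:Z - (m%:Z - q%:Z) = q%:Z by lia.
by rewrite Hser_nat eqxx mulr1.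
Qed.

Lemma sum_Hser_nat (G : nat -> R) (j m : nat) :
  \sum_(1 <= l < j.+1) G l * Hser H (j - l) m%:Z = if (m < j)%N then G (j - m)%N else 0.
Proof.
under eq_bigr do rewrite Hser_nat.
case: ltnP => mj; last first.
  rewrite big_seq big1 // => l; rewrite mem_index_iota => lr.
  by case: eqP => [e|]; rewrite ?mulr0 //; lia.
rewrite (bigD1_seq (j - m)%N) /=; last exact: iota_uniq; last by rewrite mem_index_iota; lia.
rewrite big1_seq ?addr0; last first.
  move=> l /andP[nl]; rewrite mem_index_iota => lr.
  by case: eqP => [e|]; rewrite ?mulr0 //; move/eqP: nl; lia.
have -> : (m == j - (j - m))%N by apply/eqP; lia.
by rewrite mulr1.
Qed.

Lemma CS_rhs_nat (j k m : nat) : CS_rhs H j k m%:Z = 0.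
Proof.
rewrite /CS_rhs !sum_Hser_nat lmul_Hser_nat !Hser_subz Hser_nat.
case: eqP => [e|ne].
  have -> : (m < k)%N = false by lia.
  have -> : (m < j)%N = false by lia.
  by rewrite subrr !addr0.
have subk_neq : (k <= m)%N -> ((m - k)%N == j) = false by move=> *; apply/negbTE; lia.
have subj_neq : (j <= m)%N -> ((m - j)%N == k) = false by move=> *; apply/negbTE; lia.
by case: ltnP => mj; case: ltnP => mk; rewrite ?subk_neq ?subj_neq //=; ring.
Qed.

Lemma dHdtE (j k : nat) (n : int) : dHdt H j k n = CS_rhs H j k n.
Proof.
rewrite /dHdt /X; case: ltrP => n0; first by congr CS_rhs; lia.
have -> : n = (`|n|%N)%:Z by lia.
by rewrite CS_rhs_nat.
Qed.

Lemma eq_in_Hplus {f g : laurent R} : in_Hplus H f -> f =1 g -> in_Hplus H g.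
Proof. by move=> [N [c hc]] e; exists N, c => n; rewrite -e. Qed.

Lemma Hser_in_Hplus (m : nat) : in_Hplus H (Hser H m).
Proof.
exists m.+1, (fun k => (k == m)%:R) => n.
rewrite big_ord_recr /= eqxx mul1r big1 ?add0r // => i _.
by rewrite (_ : (i == m :> nat) = false) ?mul0r //; apply/negbTE; rewrite neq_ltn ltn_ord.
Qed.

Lemma in_Hplus0 : in_Hplus H (fun _ => 0).
Proof. by exists 0%N, (fun _ => 0) => n; rewrite big_ord0. Qed.

Lemma in_HplusZ (a : R) {f : laurent R} : in_Hplus H f -> in_Hplus H (fun n => a * f n).
Proof.
move=> [N [c hc]]; exists N, (fun k => a * c k) => n.
by rewrite hc mulr_sumr; apply: eq_bigr => i _; rewrite mulrA.
Qed.

Lemma in_HplusD {f g : laurent R} :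
  in_Hplus H f -> in_Hplus H g -> in_Hplus H (fun n => f n + g n).
Proof.
move=> [N1 [c1 e1]] [N2 [c2 e2]].
pose trunc (N : nat) (ck : nat -> R) k := if (k < N)%N then ck k else 0.
exists (N1 + N2)%N, (fun k => trunc N1 c1 k + trunc N2 c2 k) => n.
have widen N (ck : nat -> R) : (N <= N1 + N2)%N ->
    \sum_(k < N) ck k * Hser H k n = \sum_(k < N1 + N2) trunc N ck k * Hser H k n.
  move=> le; rewrite (big_ord_widen _ (fun k => ck k * Hser H k n) le) big_mkcond.
  by apply: eq_bigr => i _; rewrite /trunc; case: ifP; rewrite ?mul0r.
rewrite e1 e2 (widen N1) ?(widen N2) ?leq_addr ?leq_addl // -big_split /=.
by apply: eq_bigr => i _; rewrite mulrDl.
Qed.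

Lemma in_Hplus_sum (s : seq nat) (F : nat -> laurent R) :
  (forall i, in_Hplus H (F i)) -> in_Hplus H (fun n => \sum_(i <- s) F i n).
Proof.
move=> hF; elim: s => [|a s IH].
  by apply: (eq_in_Hplus in_Hplus0) => n; rewrite big_nil.
by apply: (eq_in_Hplus (in_HplusD (hF a) IH)) => n; rewrite big_cons.
Qed.

Lemma in_Hplus_Hminus0 {f : laurent R} : in_Hplus H f -> in_Hminus f -> f =1 (fun _ => 0).
Proof.
move=> [N [c e]] fm.
have c0 (m : 'I_N) : c m = 0.
  have := fm m%:Z; rewrite e lez_nat => /(_ isT).
  rewrite (bigD1 m) //= Hser_nat eqxx mulr1 big1 ?addr0 // => i ni.
  rewrite Hser_nat; case: eqP => [ei|]; rewrite ?mulr0 //.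
  by move/negP: ni; case; apply/eqP/val_inj.
by move=> n; rewrite e big1 // => i _; rewrite c0 mul0r.
Qed.

Lemma pi_minus_uniq {f g : laurent R} :
  in_Hminus g -> in_Hplus H (fun n => f n - g n) -> pi_minus H f = g.
Proof.
move=> gm gp; rewrite /pi_minus.
set P := (fun g0 : laurent R => _).
have [g'm g'p] : P (epsilon (inhabits (fun _ : int => 0 : R)) P).
  by apply: epsilon_spec; exists g.
set g' := epsilon _ _ in g'm g'p *.
have dp : in_Hplus H (fun n => g n - g' n).
  by apply: (eq_in_Hplus (in_HplusD g'p (in_HplusZ (-1) gp))) => n /=; ring.
have dm : in_Hminus (fun n => g n - g' n) by move=> m m0; rewrite gm // g'm // subrr.
by apply: funext => n; apply/eqP; rewrite eq_sym -subr_eq0 (in_Hplus_Hminus0 dp dm).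
Qed.

Lemma lmul_Hser_addr_dHdt_in_Hplus (j k : nat) :
  in_Hplus H (fun n => lmul (Hser H j) (Hser H k) n + dHdt H k j n).
Proof.
apply: (@eq_in_Hplus (fun n => Hser H (k + j) n
    + \sum_(l <- index_iota 1 j.+1) Hc H k l * Hser H (j - l) n
    + \sum_(l <- index_iota 1 k.+1) Hc H j l * Hser H (k - l) n)).
  by do 2?apply: in_HplusD; do ?[apply: in_Hplus_sum => l; apply: in_HplusZ];
    exact: Hser_in_Hplus.
by move=> n; rewrite dHdtE /CS_rhs lmulC; ring.
Qed.

End CentralSystem.

Theorem mainTheorem2 (R : fieldType) (H : nat -> nat -> R) (j k : nat) :
  dHdt H k j = (fun n : int => - pi_minus H (lmul (Hser H j) (Hser H k)) n).
Proof.
have dHdt_Hminus : in_Hminus (fun n => - dHdt H k j n).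
  by move=> n n0; rewrite /dHdt ltNge n0 oppr0.
rewrite (pi_minus_uniq _ _ dHdt_Hminus); last first.
  by move/eq_in_Hplus: (lmul_Hser_addr_dHdt_in_Hplus _ H j k); apply=> n; rewrite opprK.
by apply: funext => n; rewrite opprK.
Qed.
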